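(* Let \(K\rightarrowtail L\twoheadrightarrow P\) be an extension of complete, torsionfree bornological \(V\)-modules and assume that \(P\) is algebraically torsionfree. Then \(K'\rightarrowtail L'\twoheadrightarrow P'\) is an extension of complete bornological \(V\)-modules as well. In addition, \(L\) is nuclear if and only if both \(K\) and \(P\) are nuclear.
   Context: Let \(V\) be a complete discrete valuation ring with uniformiser \(\pi\). A bornology on a set is a collection of subsets (called bounded) containing all finite subsets and closed under finite unions and under taking subsets. A bornological \(V\)-module is a \(V\)-module with a bornology such that every bounded subset is contained in a bounded \(V\)-submodule; bounded maps send bounded sets to bounded sets. It is complete if every bounded subset is contained in a bounded, \(\pi\)-adically complete \(V\)-submodule, and torsionfree if it is torsionfree as a \(V\)-module and \(\pi^{-1}S=\{x:\pi x\in S\}\) is bounded for every bounded \(S\). An extension \(K\rightarrowtail L\twoheadrightarrow P\) is a sequence of bounded \(V\)-linear maps, exact as \(V\)-modules, in which \(K\to L\) is a bornological embedding (a subset of \(K\) is bounded iff its image in \(L\) is bounded) and \(L\to P\) is a bornological quotient map (every bounded subset of \(P\) is the image of a bounded subset of \(L\)). A subset \(S\) of \(M\) is compactoid if there is a bounded \(V\)-submodule \(T\subseteq M\) with \(S\subseteq T\) such that for every \(n\in\mathbb N\) there is a finite set \(F_n\subseteq T\) with \(S\subseteq VF_n+\pi^nT\). \(M'\) denotes \(M\) with the bornology of compactoid subsets; \(M\) is nuclear if all its bounded subsets are compactoid. *)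

From HB Require Import structures.
From mathcomp Require Import all_boot all_order all_algebra.
From mathcomp Require Import boolp classical_sets cardinality.
Set Implicit Arguments. Unset Strict Implicit. Unset Printing Implicit Defensive.
Import GRing.Theory.
Local Open Scope ring_scope.
Local Open Scope classical_set_scope.

Definition is_cdvr (V : idomainType) (pi : V) : Prop :=
  [/\ pi != 0, pi \notin GRing.unit,
   (forall a : V, a != 0 ->
      exists (u : V) (n : nat), u \is a GRing.unit /\ a = u * pi ^+ n),
   (forall a : V, (forall n : nat, exists b, a = pi ^+ n * b) -> a = 0) &
   (forall x : nat -> V,
      (forall n : nat, exists b, x n.+1 - x n = pi ^+ n * b) ->
      exists y, forall n : nat, exists b, y - x n = pi ^+ n * b)].

Definition submodule (V : pzRingType) (M : lmodType V) (T : set M) : Prop :=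
  [/\ T 0, (forall x y, T x -> T y -> T (x + y)) &
      (forall (a : V) x, T x -> T (a *: x))].

(* T (a submodule) is pi-adically complete: T -> lim T / pi^n T is bijective,
   i.e. pi-adically separated and every pi-adic Cauchy sequence converges. *)
Definition pi_complete (V : pzRingType) (pi : V) (M : lmodType V) (T : set M)
  : Prop :=
  (forall x, T x -> (forall n : nat, exists t, T t /\ x = pi ^+ n *: t) -> x = 0)
  /\
  (forall x : nat -> M, (forall n, T (x n)) ->
     (forall n : nat, exists t, T t /\ x n.+1 - x n = pi ^+ n *: t) ->
     exists y, T y /\ forall n : nat, exists t, T t /\ y - x n = pi ^+ n *: t).

Definition bornology (X : Type) (B : set (set X)) : Prop :=
  [/\ (forall S : set X, finite_set S -> B S),
      (forall S1 S2, B S1 -> B S2 -> B (S1 `|` S2)) &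
      (forall S1 S2, S1 `<=` S2 -> B S2 -> B S1)].

Definition born_module (V : pzRingType) (M : lmodType V) (B : set (set M))
  : Prop :=
  bornology B /\
  (forall S, B S -> exists T, [/\ B T, submodule T & S `<=` T]).

Definition complete_born (V : pzRingType) (pi : V) (M : lmodType V)
  (B : set (set M)) : Prop :=
  born_module B /\
  (forall S, B S -> exists T, [/\ B T, submodule T, pi_complete pi T & S `<=` T]).

Definition torsionfree_mod (V : pzRingType) (M : lmodType V) : Prop :=
  forall (a : V) (x : M), a *: x = 0 -> a = 0 \/ x = 0.

Definition torsionfree_born (V : pzRingType) (pi : V) (M : lmodType V)
  (B : set (set M)) : Prop :=
  torsionfree_mod M /\ (forall S, B S -> B [set x | S (pi *: x)]).

Definition bounded_map (X Y : Type) (BX : set (set X)) (BY : set (set Y))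
  (f : X -> Y) : Prop :=
  forall S, BX S -> BY (f @` S).

Definition extension (V : pzRingType) (K L P : lmodType V)
  (BK : set (set K)) (BL : set (set L)) (BP : set (set P))
  (f : {linear K -> L}) (g : {linear L -> P}) : Prop :=
  [/\ bounded_map BK BL f, bounded_map BL BP g,
      injective f, (forall p : P, exists l : L, g l = p) &
      (forall l : L, g l = 0 <-> exists k : K, f k = l)] /\
  (forall S : set K, BK S <-> BL (f @` S)) /\
  (forall S : set P, BP S -> exists S' : set L, BL S' /\ S = g @` S').

(* compactoid subsets: the bornology of M' *)
Definition compactoid (V : pzRingType) (pi : V) (M : lmodType V)
  (B : set (set M)) : set (set M) :=
  fun S => exists T : set M, [/\ B T, submodule T, S `<=` T &
    forall n : nat, exists F : seq M, (forall x, x \in F -> T x) /\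
      S `<=` [set z | exists (c : 'I_(size F) -> V) (t : M),
                 T t /\ z = \sum_(i < size F) c i *: F`_i + pi ^+ n *: t]].

Definition nuclear (V : pzRingType) (pi : V) (M : lmodType V)
  (B : set (set M)) : Prop :=
  forall S, B S -> compactoid pi B S.

From HB Require Import structures.
From mathcomp Require Import all_boot all_order all_algebra.
From mathcomp Require Import boolp classical_sets cardinality.
Set Implicit Arguments. Unset Strict Implicit. Unset Printing Implicit Defensive.
Import GRing.Theory.
Local Open Scope ring_scope.
Local Open Scope classical_set_scope.

(* To pull an approximation of f(S)
   back to K, note that the trace of span F + pi^n T on f(K) is finitely generated modulo
   f(K) /\ pi^n T because V is a discrete valuation ring, and that this last module is
   f(pi^n f^-1(T)) because P is torsionfree. To lift a compactoid S of P, the differences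
   a_(n+1) - a_n of the approximations of a point of S lie in pi^n T and in a fixed
   finitely generated module, hence are pi^n times images of finitely many fixed elements
   of L; the resulting pi-adic series converges in a complete bounded submodule of L.
   The pi-adic closure of the approximating spans inside a complete bounded submodule is a
   complete compactoid hull, so M' is complete. Finally a bounded S in L lies in
   S' + f(D) with S' a compactoid lift of g(S) and D bounded in K, so L is nuclear as
   soon as K and P are. *)

Section Submodules.
Variables (V : pzRingType) (M : lmodType V).
Implicit Types (A C T : set M).

Definition sumset A C : set M := [set x + y | x in A & y in C].

Lemma submodule0 T : submodule T -> T 0. Proof. by case. Qed.

Lemma submoduleD T x y : submodule T -> T x -> T y -> T (x + y).
Proof. by case=> _ + _; apply. Qed.

Lemma submoduleZ T a x : submodule T -> T x -> T (a *: x).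
Proof. by case=> _ _; apply. Qed.

Lemma submoduleN T x : submodule T -> T x -> T (- x).
Proof. by move=> sT Tx; rewrite -scaleN1r; apply: submoduleZ. Qed.

Lemma submoduleB T x y : submodule T -> T x -> T y -> T (x - y).
Proof. by move=> sT Tx Ty; apply: submoduleD => //; apply: submoduleN. Qed.

Lemma submodule_sum T (I : Type) (r : seq I) (F : I -> M) :
  submodule T -> (forall i, T (F i)) -> T (\sum_(i <- r) F i).
Proof.
move=> sT TF; elim/big_ind: _ => //; [exact: submodule0 sT | move=> x y; exact: submoduleD].
Qed.

Lemma submoduleT : submodule [set: M]. Proof. by []. Qed.

Lemma submodule_zero : submodule [set 0 : M].
Proof. by split=> // [x y -> ->|a x ->]; rewrite ?addr0 ?scaler0. Qed.

Lemma submoduleI A C : submodule A -> submodule C -> submodule (A `&` C).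
Proof.
move=> sA sC; split=> [|x y [Ax Cx] [Ay Cy]|a x [Ax Cx]]; first by split; exact: submodule0.
  by split; apply: submoduleD.
by split; apply: submoduleZ.
Qed.

Lemma submodule_bigcap (I : Type) (A : I -> set M) :
  (forall i, submodule (A i)) -> submodule (\bigcap_i A i).
Proof.
move=> sA; split=> [i _|x y Ax Ay i _|a x Ax i _]; first exact: submodule0.
  by apply: submoduleD; [|exact: Ax|exact: Ay].
by apply: submoduleZ; [|exact: Ax].
Qed.

Lemma submodule_sumset A C : submodule A -> submodule C -> submodule (sumset A C).
Proof.
move=> sA sC; split.
- by exists 0; [exact: submodule0 | exists 0; [exact: submodule0 | rewrite addr0]].
- move=> _ _ [x1 Ax1 [y1 Cy1 <-]] [x2 Ax2 [y2 Cy2 <-]].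
  exists (x1 + x2); first exact: submoduleD.
  by exists (y1 + y2); [exact: submoduleD | rewrite addrACA].
- move=> a _ [x Ax [y Cy <-]]; exists (a *: x); first exact: submoduleZ.
  by exists (a *: y); [exact: submoduleZ | rewrite scalerDr].
Qed.

Lemma sumset_sub T A C : submodule T -> A `<=` T -> C `<=` T -> sumset A C `<=` T.
Proof. by move=> sT AT CT _ [x /AT Tx [y /CT Ty <-]]; apply: submoduleD. Qed.

Lemma scale_sub T a : submodule T -> [set a *: t | t in T] `<=` T.
Proof. by move=> sT _ [t Tt <-]; apply: submoduleZ. Qed.

Lemma born_module_join (B : set (set M)) T1 T2 : born_module B -> B T1 -> B T2 ->
  exists T, [/\ B T, submodule T, T1 `<=` T & T2 `<=` T].
Proof.
case=> [[_ BU _] Bhull] B1 B2; have [T [BT sT T12]] := Bhull _ (BU _ _ B1 B2).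
by exists T; split=> // x Tx; apply: T12; [left | right].
Qed.

End Submodules.

Section LinearSpan.
Variables (V : pzRingType) (M : lmodType V).

Definition linspan (F : seq M) : set M :=
  [set x | exists c : 'I_(size F) -> V, x = \sum_(i < size F) c i *: F`_i].

Lemma linspan_nil x : linspan [::] x <-> x = 0.
Proof.
split; first by case=> c ->; rewrite big_ord0.
by move=> ->; exists (fun _ => 0); rewrite big_ord0.
Qed.

Lemma linspan_cons a F x :
  linspan (a :: F) x <-> exists c y, linspan F y /\ x = c *: a + y.
Proof.
split=> [[c ->]|[c [y [[d ->] ->]]]].
  rewrite big_ord_recl /=; exists (c ord0), (\sum_(i < size F) c (lift ord0 i) *: F`_i).
  by split=> //; exists (fun i => c (lift ord0 i)).
exists (fun i : 'I_(size F).+1 => if unlift ord0 i is Some j then d j else c).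
rewrite big_ord_recl /= unlift_none; congr (_ + _).
by apply: eq_bigr => i _; rewrite liftK.
Qed.

Lemma linspan_submodule F : submodule (linspan F).
Proof.
split; first by exists (fun _ => 0); rewrite big1 // => i _; rewrite scale0r.
  move=> _ _ [c ->] [d ->]; exists (fun i => c i + d i).
  by rewrite -big_split; apply: eq_bigr => i _; rewrite scalerDl.
move=> a _ [c ->]; exists (fun i => a * c i).
by rewrite scaler_sumr; apply: eq_bigr => i _; rewrite scalerA.
Qed.

Lemma linspan_mem F x : x \in F -> linspan F x.
Proof.
elim: F => // a F IH; rewrite inE => /orP [/eqP ->|/IH Fx]; apply/linspan_cons.
  by exists 1, 0; split; [exact: submodule0 (linspan_submodule F) | rewrite scale1r addr0].
by exists 0, x; rewrite scale0r add0r.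
Qed.

Lemma linspan_sub T F : submodule T -> (forall x, x \in F -> T x) -> linspan F `<=` T.
Proof.
move=> sT; elim: F => [_ x /linspan_nil ->|a F IH FT x /linspan_cons [c [y [Fy ->]]]].
  exact: submodule0.
apply: submoduleD => //; first by apply: submoduleZ => //; apply: FT; exact: mem_head.
by apply: IH Fy => z zF; apply: FT; rewrite inE zF orbT.
Qed.

Lemma sub_linspan F G : {subset F <= G} -> linspan F `<=` linspan G.
Proof. by move=> FG; apply: linspan_sub (linspan_submodule G) _ => x /FG /linspan_mem. Qed.

Lemma linspan_catl F G : linspan F `<=` linspan (F ++ G).
Proof. by apply: sub_linspan => x xF; rewrite mem_cat xF. Qed.

Lemma linspan_catr F G : linspan G `<=` linspan (F ++ G).
Proof. by apply: sub_linspan => x xG; rewrite mem_cat xG orbT. Qed.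

Lemma sumset_linspan_cons (Q : set M) a F z :
  sumset (linspan (a :: F)) Q z <-> exists b, sumset (linspan F) Q (z - b *: a).
Proof.
split=> [[_ /linspan_cons [b [w [Fw ->]]] [q Qq <-]]|[b [w Fw [q Qq wqE]]]].
  by exists b; exists w => //; exists q; rewrite // addrAC (addrC (b *: a) w) addrK.
exists (b *: a + w); first by apply/linspan_cons; exists b, w.
by exists q; rewrite // -addrA wqE addrC subrK.
Qed.

End LinearSpan.

Section LinearMaps.
Variables (V : pzRingType) (M N : lmodType V) (h : {linear M -> N}).

Lemma submodule_image T : submodule T -> submodule (h @` T).
Proof.
move=> sT; split; first by exists 0; [exact: submodule0 | rewrite linear0].
  by move=> _ _ [x Tx <-] [y Ty <-]; exists (x + y); [exact: submoduleD | rewrite linearD].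
by move=> a _ [x Tx <-]; exists (a *: x); [exact: submoduleZ | rewrite linearZ].
Qed.

Lemma submodule_preimage T : submodule T -> submodule (h @^-1` T).
Proof.
move=> sT; split; rewrite /preimage /=; first by rewrite linear0; exact: submodule0.
  by move=> x y Tx Ty; rewrite linearD; apply: submoduleD.
by move=> a x Tx; rewrite linearZ; apply: submoduleZ.
Qed.

Lemma lift_seq (A : set M) (G : seq N) : (forall y, y \in G -> (h @` A) y) ->
  exists s, map h s = G /\ (forall x, x \in s -> A x).
Proof.
elim: G => [_|y G IH hG]; first by exists [::].
have [x Ax hx] := hG y (mem_head _ _).
have [|s [sG sA]] := IH; first by move=> z zG; apply: hG; rewrite inE zG orbT.
exists (x :: s); split; first by rewrite /= hx sG.
by move=> z; rewrite inE => /orP [/eqP ->|/sA].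
Qed.

Lemma linspan_map F :
  linspan (map h F) = h @` linspan F.
Proof.
apply/seteqP; split.
  elim: F => [y /linspan_nil ->|a F IH y /linspan_cons [c [_ [/IH [x Fx <-] ->]]]].
    by exists 0; [apply/linspan_nil | rewrite linear0].
  by exists (c *: a + x); [apply/linspan_cons; exists c, x | rewrite linearD linearZ].
move=> _ [x + <-]; elim: F x => [x /linspan_nil ->|a F IH x /linspan_cons [c [y [Fy ->]]]].
  by rewrite linear0; apply/linspan_nil.
by apply/linspan_cons; exists c, (h y); split; [exact: IH | rewrite linearD linearZ].
Qed.

End LinearMaps.

Section DiscreteValuation.
Variables (V : idomainType) (pi : V) (M : lmodType V).
Hypothesis pi_factor :
  forall a : V, a != 0 -> exists u n, u \is a GRing.unit /\ a = u * pi ^+ n.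

Lemma ideal_pow_pi (I : set V) : (forall c b, I b -> I (c * b)) ->
  I `<=` [set 0] \/ exists m, I (pi ^+ m) /\ forall b, I b -> exists c, b = c * pi ^+ m.
Proof.
move=> IM; have I_pow b : I b -> b != 0 -> exists2 m, I (pi ^+ m) & exists u, b = u * pi ^+ m.
  move=> Ib /pi_factor [u [m [uU bE]]]; exists m; last by exists u.
  by rewrite -[pi ^+ m]mul1r -(mulVr uU) -mulrA -bE; apply: IM.
have [[m Im]|noI] := pselect (exists m, I (pi ^+ m)); last first.
  left=> b Ib; apply/eqP; apply: contraT => b0.
  by have [m Im _] := I_pow b Ib b0; case: noI; exists m.
have exm : exists m, `[< I (pi ^+ m) >] by exists m; apply/asboolP.
case: (ex_minnP exm) => m0 /asboolP Im0 min_m0; right; exists m0; split=> // b Ib.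
have [->|b0] := eqVneq b 0; first by exists 0; rewrite mul0r.
have [k Ik [u ->]] := I_pow b Ib b0; have le_m0k := min_m0 k (asboolT Ik).
by exists (u * pi ^+ (k - m0)); rewrite -mulrA -exprD subnK.
Qed.

(* (N /\ (span F + Q)) / (N /\ Q) embeds into the finitely generated module
   (span F + Q) / Q, and V is noetherian. *)
Lemma linspan_meet_fingen (N Q : set M) F : submodule N -> submodule Q ->
  exists G : seq M, (forall x, x \in G -> (N `&` sumset (linspan F) Q) x) /\
    N `&` sumset (linspan F) Q `<=` sumset (linspan G) (N `&` Q).
Proof.
move=> sN sQ; elim: F => [|a F [G [GNFQ NFQ_G]]].
  exists [::]; split=> // z [Nz [_ /linspan_nil -> [q Qq]]]; rewrite add0r => qz.
  by exists 0; [exact/linspan_nil | exists q; [split; rewrite // qz | rewrite add0r]].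
have FQ := submodule_sumset (linspan_submodule F) sQ.
(* The b with b *: a in N + span F + Q form an ideal, generated by some pi ^+ m; the
   N-component y0 of pi ^+ m *: a is the one new generator. *)
pose I b := sumset N (sumset (linspan F) Q) (b *: a).
have I_ideal c b : I b -> I (c * b).
  by rewrite /I -scalerA; apply: submoduleZ; apply: submodule_sumset.
have I_coef z b : N z -> sumset (linspan F) Q (z - b *: a) -> I b.
  move=> Nz zS; exists z => //; exists (- (z - b *: a)); first exact: submoduleN.
  by rewrite opprB addrC subrK.
have FQ_cons : sumset (linspan F) Q `<=` sumset (linspan (a :: F)) Q.
  by move=> z zS; apply/sumset_linspan_cons; exists 0; rewrite scale0r subr0.
have [I0|[m [[y0 Ny0 [s0 Ss0 y0E]] I_pi]]] := ideal_pow_pi I_ideal.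
  exists G; split=> [x /GNFQ [Nx /FQ_cons] //|z [Nz /sumset_linspan_cons [b zS]]].
  have b0 : b = 0 := I0 b (I_coef z b Nz zS).
  by apply: NFQ_G; split=> //; rewrite b0 scale0r subr0 in zS.
exists (y0 :: G); split.
  move=> x; rewrite inE => /orP [/eqP ->|/GNFQ [Nx /FQ_cons] //]; split=> //.
  apply/sumset_linspan_cons; exists (pi ^+ m).
  by rewrite -y0E opprD addrA subrr add0r; exact: submoduleN.
move=> z [Nz /sumset_linspan_cons [b zS]].
have [c bE] := I_pi b (I_coef z b Nz zS).
have : (N `&` sumset (linspan F) Q) (z - c *: y0).
  split; first by apply: submoduleB => //; apply: submoduleZ.
  have -> : z - c *: y0 = (z - b *: a) + c *: (pi ^+ m *: a - y0).
    by rewrite bE -scalerA scalerBr addrA subrK.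
  apply: (submoduleD FQ) => //; apply: (submoduleZ _ FQ).
  by rewrite -y0E addrC addKr.
case/NFQ_G=> y Gy [q' NQq' yq'E].
exists (c *: y0 + y); first by apply/linspan_cons; exists c, y.
by exists q' => //; rewrite -addrA yq'E addrC subrK.
Qed.

End DiscreteValuation.

Section Compactoid.
Variables (V : pzRingType) (pi : V) (M : lmodType V) (B : set (set M)).
Implicit Types (S T : set M).

Definition compactoid_in S T : Prop :=
  [/\ B T, submodule T, S `<=` T &
      forall n : nat, exists F : seq M, (forall x, x \in F -> T x) /\
        S `<=` sumset (linspan F) [set pi ^+ n *: t | t in T]].

Lemma compactoidE S : compactoid pi B S <-> exists T, compactoid_in S T.
Proof.
split=> -[T [BT sT ST approx]]; exists T; split=> // n; have [F [FT SF]] := approx n;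
  exists F; split=> // z /SF.
  case=> c [t [Tt ->]]; exists (\sum_(i < size F) c i *: F`_i); first by exists c.
  by exists (pi ^+ n *: t) => //; exists t.
by case=> _ [c ->] [_ [t Tt <-] <-]; exists c, t.
Qed.

Lemma compactoid_in_subl S S' T : S' `<=` S -> compactoid_in S T -> compactoid_in S' T.
Proof.
move=> S'S [BT sT ST approx]; split=> // [x /S'S /ST //|n].
by have [F [FT SF]] := approx n; exists F; split=> // x /S'S /SF.
Qed.

Lemma compactoid_in_subr S T T' :
  B T' -> submodule T' -> T `<=` T' -> compactoid_in S T -> compactoid_in S T'.
Proof.
move=> BT' sT' TT' [BT sT ST approx]; split=> // [x /ST /TT' //|n].
have [F [FT SF]] := approx n; exists F; split=> [x /FT /TT' //|z /SF].
by apply: image2_subset => //; apply: image_subset.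
Qed.

Lemma compactoid_in_setU S1 S2 T :
  compactoid_in S1 T -> compactoid_in S2 T -> compactoid_in (S1 `|` S2) T.
Proof.
move=> [BT sT ST1 approx1] [_ _ ST2 approx2]; split=> // [x [/ST1|/ST2] //|n].
have [F1 [F1T SF1]] := approx1 n; have [F2 [F2T SF2]] := approx2 n.
exists (F1 ++ F2); split=> [x|z]; first by rewrite mem_cat => /orP [/F1T|/F2T].
by case=> [/SF1|/SF2]; apply: image2_subset => //; [exact: linspan_catl | exact: linspan_catr].
Qed.

Lemma compactoid_in_sumset S1 S2 T :
  compactoid_in S1 T -> compactoid_in S2 T -> compactoid_in (sumset S1 S2) T.
Proof.
move=> [BT sT ST1 approx1] [_ _ ST2 approx2]; split=> //; first exact: sumset_sub.
move=> n; have [F1 [F1T SF1]] := approx1 n; have [F2 [F2T SF2]] := approx2 n.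
exists (F1 ++ F2); split=> [x|z [x1 /SF1 x1S [x2 /SF2 x2S <-]]].
  by rewrite mem_cat => /orP [/F1T|/F2T].
case: x1S => w1 Fw1 [y1 [t1 Tt1 <-] <-]; case: x2S => w2 Fw2 [y2 [t2 Tt2 <-] <-].
exists (w1 + w2).
  by apply: (submoduleD (linspan_submodule _)); [exact: linspan_catl | exact: linspan_catr].
exists (pi ^+ n *: (t1 + t2)); first by exists (t1 + t2) => //; exact: submoduleD.
by rewrite scalerDr addrACA.
Qed.

Lemma compactoid_bounded S : bornology B -> compactoid pi B S -> B S.
Proof. by case=> _ _ Bsub /compactoidE [T [BT _ ST _]]; apply: Bsub BT. Qed.

Lemma compactoid_subset S S' : S' `<=` S -> compactoid pi B S -> compactoid pi B S'.
Proof.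
by move=> S'S /compactoidE [T cT]; apply/compactoidE; exists T; exact: compactoid_in_subl cT.
Qed.

Section BornModule.
Hypothesis bB : born_module B.

Lemma compactoid_common S1 S2 : compactoid pi B S1 -> compactoid pi B S2 ->
  exists T, compactoid_in S1 T /\ compactoid_in S2 T.
Proof.
move=> /compactoidE [T1 c1] /compactoidE [T2 c2]; case: (c1) => B1 _ _ _; case: (c2) => B2 _ _ _.
have [T [BT sT T1T T2T]] := born_module_join bB B1 B2.
by exists T; split; [exact: compactoid_in_subr c1 | exact: compactoid_in_subr c2].
Qed.

Lemma compactoid_sumset S1 S2 : compactoid pi B S1 -> compactoid pi B S2 ->
  compactoid pi B (sumset S1 S2).
Proof.
move=> c1 c2; have [T [c1T c2T]] := compactoid_common c1 c2.
by apply/compactoidE; exists T; apply: compactoid_in_sumset.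
Qed.

Lemma compactoid_bornology : bornology (compactoid pi B).
Proof.
have [[Bfin _ _] Bhull] := bB; split.
- move=> S /finite_seqP [s ->]; have [T [BT sT ST]] := Bhull _ (Bfin _ (finite_seq s)).
  apply/compactoidE; exists T; split=> // n; exists s; split=> [x xs|z zs]; first exact: ST.
  exists z; first exact: linspan_mem.
  by exists 0; [exists 0; [exact: submodule0 | exact: scaler0] | exact: addr0].
- move=> S1 S2 c1 c2; have [T [c1T c2T]] := compactoid_common c1 c2.
  by apply/compactoidE; exists T; apply: compactoid_in_setU.
- by move=> S1 S2; apply: compactoid_subset.
Qed.

End BornModule.

(* For witnesses F of a compactoid S inside T this is a hull of S that is still
   compactoid inside T and inherits pi-adic completeness from T. *)
Definition approx_set (T : set M) (F : nat -> seq M) : set M :=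
  T `&` \bigcap_n sumset (linspan (F n)) [set pi ^+ n *: t | t in T].

Lemma approx_set_compactoid_in T F : B T -> submodule T ->
  (forall n x, x \in F n -> T x) -> compactoid_in (approx_set T F) T.
Proof.
move=> BT sT FT; split=> // [x [] //|n].
by exists (F n); split=> [x /FT //|x [_ /(_ n I)]].
Qed.

Lemma approx_set_closed T F x : submodule T -> T x ->
  (forall m, exists2 u, approx_set T F u & exists2 t, T t & x = u + pi ^+ m *: t) ->
  approx_set T F x.
Proof.
move=> sT Tx xU; split=> // m _; have [u [_ /(_ m I)]] := xU m.
case=> w Fw [_ [t' Tt' <-] <-] [t Tt ->]; exists w => //.
exists (pi ^+ m *: (t' + t)); first by exists (t' + t) => //; exact: submoduleD.
by rewrite scalerDr addrA.
Qed.

End Compactoid.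

Section PiAdicLimits.
Variables (V : pzRingType) (pi : V) (M : lmodType V).

Lemma pi_complete_series T (e : nat -> M) : submodule T -> pi_complete pi T ->
  (forall k, T (e k)) ->
  exists2 z, T z & forall N, exists2 t, T t & z = \sum_(k < N) pi ^+ k *: e k + pi ^+ N *: t.
Proof.
move=> sT [_ cT] Te.
have Tx N : T (\sum_(k < N) pi ^+ k *: e k).
  by apply: submodule_sum => // k; apply: submoduleZ.
have [|y [Ty yE]] := cT (fun N => \sum_(k < N) pi ^+ k *: e k) Tx.
  by move=> N; exists (e N); split; rewrite // big_ord_recr /= addrAC subrr add0r.
by exists y => // N; have [t [Tt tE]] := yE N; exists t; rewrite // -tE addrC subrK.
Qed.

Lemma approximation_increments (T : set M) (F : nat -> seq M) s : submodule T ->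
  (forall n, sumset (linspan (F n)) [set pi ^+ n *: t | t in T] s) ->
  exists a : nat -> M, [/\ linspan (F 0%N) (a 0%N),
    forall n, ([set pi ^+ n *: t | t in T] `&` linspan (F n ++ F n.+1)) (a n.+1 - a n) &
    forall n, exists2 t, T t & s = a n + pi ^+ n *: t].
Proof.
move=> sT sF.
have approx n : exists w, linspan (F n) w /\ exists2 t, T t & s = w + pi ^+ n *: t.
  by have [w Fw [y [t Tt tE] sE]] := sF n; exists w; split=> //; exists t; rewrite // -sE -tE.
have [a aP] := choice approx; exists a; split=> [|n|n]; last exact: proj2 (aP n).
  exact: proj1 (aP 0%N).
have [Fa [t Tt sE]] := aP n; have [Fa' [t' Tt' sE']] := aP n.+1; split.
  exists (t - pi *: t'); first by apply: submoduleB => //; apply: submoduleZ.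
  have -> : a n.+1 = s - pi ^+ n.+1 *: t' by rewrite sE' addrK.
  have -> : a n = s - pi ^+ n *: t by rewrite sE addrK.
  by rewrite scalerBr scalerA -exprSr opprB [RHS]addrC [RHS]addrA subrK.
by apply: (submoduleB (linspan_submodule _)); [exact: linspan_catr | exact: linspan_catl].
Qed.

Lemma complete_born_separated (B : set (set M)) T x : complete_born pi B -> B T ->
  (forall n, exists2 t, T t & x = pi ^+ n *: t) -> x = 0.
Proof.
move=> [_ Bc] BT xT; have [Tc [_ sTc [sepTc _] TTc]] := Bc T BT.
apply: sepTc => [|n]; last by have [t /TTc Tct ->] := xT n; exists t.
by have [t /TTc Tct ->] := xT 0%N; rewrite expr0 scale1r.
Qed.

End PiAdicLimits.

Lemma torsionfree_scale_inj (V : idomainType) (M : lmodType V) (a : V) :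
  torsionfree_mod M -> a != 0 -> injective ( *:%R a : M -> M).
Proof.
move=> tfM a0 x y /eqP; rewrite -subr_eq0 -scalerBr => /eqP /tfM [a0'|/eqP].
  by move: a0; rewrite a0' eqxx.
by rewrite subr_eq0 => /eqP.
Qed.

Section PiAdicCompletion.
Variables (V : idomainType) (pi : V) (M : lmodType V).
Hypothesis pi0 : pi != 0.
Hypothesis tfM : torsionfree_mod M.

Lemma approx_set_submodule (T : set M) F : submodule T -> submodule (approx_set pi T F).
Proof.
move=> sT; apply: submoduleI => //; apply: submodule_bigcap => n.
exact: submodule_sumset (linspan_submodule _) (submodule_image ( *:%R (pi ^+ n)) sT).
Qed.

Lemma approx_set_complete (T : set M) F : submodule T -> pi_complete pi T ->
  pi_complete pi (approx_set pi T F).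
Proof.
move=> sT [sepT cT]; set U := approx_set pi T F; have sU : submodule U.
  exact: approx_set_submodule.
split=> [x [Tx _] xpi|x Ux xcauchy].
  by apply: sepT => // n; have [t [[Tt _] ->]] := xpi n; exists t.
have [u uP] := choice xcauchy; have Uu n := proj1 (uP n); have uE n := proj2 (uP n).
have [|y [Ty yx]] := cT x (fun n => proj1 (Ux n)).
  by move=> n; exists (u n); split; [exact: proj1 (Uu n) | exact: uE].
have [t tP] := choice yx; have Tt n := proj1 (tP n); have tE n := proj2 (tP n).
have step k : t k = u k + pi *: t k.+1.
  apply: (torsionfree_scale_inj tfM (expf_neq0 k pi0)); rewrite /= scalerDr scalerA -exprSr.
  by rewrite -tE -uE -tE [RHS]addrC [RHS]addrA subrK.
have tail n m : exists2 p, U p & t n = p + pi ^+ m *: t (n + m)%N.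
  elim: m => [|m [p Up tnE]].
    by exists 0; [exact: submodule0 sU | rewrite add0r expr0 scale1r addn0].
  exists (p + pi ^+ m *: u (n + m)%N); first by apply: (submoduleD sU) => //; apply: submoduleZ.
  by rewrite addnS tnE step scalerDr scalerA -exprSr addrA.
have Ut n : U (t n).
  apply: approx_set_closed sT (Tt n) _ => m; have [p Up tnE] := tail n m.
  by exists p => //; exists (t (n + m)%N).
exists y; split; last by move=> n; exists (t n).
rewrite -(subrK (x 0%N) y); apply: (submoduleD sU) => //.
by have := tE 0%N; rewrite expr0 scale1r => ->.
Qed.

Section CompleteBornology.
Variable B : set (set M).
Hypothesis cB : complete_born pi B.

Lemma compactoid_hull S : compactoid pi B S ->
  exists U, [/\ compactoid pi B U, submodule U, pi_complete pi U & S `<=` U].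
Proof.
move=> /compactoidE [T [BT sT ST approx]]; have [F FP] := choice approx.
have [_ Bc] := cB; have [T' [BT' sT' cT' TT']] := Bc T BT.
exists (approx_set pi T' F); split.
- apply/compactoidE; exists T'; apply: approx_set_compactoid_in => // n x.
  by move=> /(proj1 (FP n)) /TT'.
- exact: approx_set_submodule.
- exact: approx_set_complete.
- move=> s Ss; split; first exact/TT'/ST.
  move=> n _; have := proj2 (FP n) s Ss.
  by apply: image2_subset => //; exact: image_subset.
Qed.

Lemma compactoid_complete : complete_born pi (compactoid pi B).
Proof.
have [bB _] := cB; split; first split.
- exact: compactoid_bornology.
- by move=> S /compactoid_hull [U [? ? _ ?]]; exists U.
- by move=> S /compactoid_hull [U [? ? ? ?]]; exists U.
Qed.

End CompleteBornology.

End PiAdicCompletion.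

Section BoundedLinearMaps.
Variables (V : pzRingType) (pi : V) (M N : lmodType V).
Variables (BM : set (set M)) (BN : set (set N)) (h : {linear M -> N}).

Lemma compactoid_image S : bounded_map BM BN h ->
  compactoid pi BM S -> compactoid pi BN (h @` S).
Proof.
move=> bh /compactoidE [T [BT sT ST approx]]; apply/compactoidE; exists (h @` T); split.
- exact: bh.
- exact: submodule_image.
- exact: image_subset.
move=> n; have [F [FT SF]] := approx n; exists (map h F); split.
  by move=> _ /mapP [x /FT Tx ->]; exists x.
move=> _ [s /SF [w Fw [_ [t Tt <-] <-]] <-]; exists (h w).
  by rewrite linspan_map; exists w.
by exists (pi ^+ n *: h t); [exists (h t) => //; exists t | rewrite linearD linearZ].
Qed.

End BoundedLinearMaps.

Section Extension.
Variables (V : idomainType) (pi : V) (K L P : lmodType V).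
Variables (BK : set (set K)) (BL : set (set L)) (BP : set (set P)).
Variables (f : {linear K -> L}) (g : {linear L -> P}).
Hypothesis pi0 : pi != 0.
Hypothesis pi_factor :
  forall a : V, a != 0 -> exists u n, u \is a GRing.unit /\ a = u * pi ^+ n.
Hypothesis cL : complete_born pi BL.
Hypothesis cP : complete_born pi BP.
Hypothesis tfP : torsionfree_mod P.
Hypothesis ext : extension BK BL BP f g.

Lemma extension_exact l : g l = 0 <-> exists k, f k = l.
Proof. by have [[_ _ _ _ ?] _] := ext. Qed.

Lemma extension_saturated n k l : f k = pi ^+ n *: l -> exists k', f k' = l.
Proof.
move=> fkE; apply/extension_exact; have : pi ^+ n *: g l = 0.
  by rewrite -linearZ -fkE; apply/extension_exact; exists k.
by case/tfP=> [/eqP|//]; rewrite expf_eq0 (negbTE pi0) andbF.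
Qed.

Lemma compactoid_pullback S : compactoid pi BL (f @` S) -> compactoid pi BK S.
Proof.
move=> /compactoidE [T [BT sT fST approx]]; apply/compactoidE; exists (f @^-1` T); split.
- have [_ [emb _]] := ext; have [[[_ _ BLsub] _] _] := cL.
  by apply/emb; apply: BLsub BT => _ [k Tk <-].
- exact: submodule_preimage.
- by move=> s Ss; apply: fST; exists s.
move=> n; have [F [FT fSF]] := approx n.
have [G [GNFQ NFQ_G]] := linspan_meet_fingen pi_factor F
  (submodule_image f (@submoduleT _ K)) (submodule_image ( *:%R (pi ^+ n)) sT).
have [GK [GKE GKT]] : exists GK, map f GK = G /\ forall k, k \in GK -> T (f k).
  apply: lift_seq => y /GNFQ [[k _ <-] FQk]; exists k => //.
  by apply: sumset_sub FQk => //; [exact: linspan_sub | exact: scale_sub].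
exists GK; split=> // s Ss; rewrite -GKE linspan_map in NFQ_G.
have [|_ [y GKy <-] [_ [[kq _ <-] [t Tt kqE]]] sE] := NFQ_G (f s).
  by split; [exists s | apply: fSF; exists s].
have [k' fk'E] := extension_saturated (esym kqE).
exists y => //; exists (pi ^+ n *: k'); first by exists k'; rewrite //= fk'E.
have [[_ _ finj _ _] _] := ext.
by apply: finj; rewrite linearD linearZZ fk'E kqE.
Qed.

Lemma bounded_lift TP : BP TP ->
  exists TL, [/\ BL TL, submodule TL, pi_complete pi TL & TP `<=` g @` TL].
Proof.
have [_ [_ quotient]] := ext; move=> /quotient [T' [BT' ->]].
have [_ Lc] := cL; have [TL [BTL sTL cTL T'TL]] := Lc T' BT'.
by exists TL; split=> //; exact: image_subset.
Qed.

Lemma scaled_linspan_lift (TP : set P) (TL : set L) (F : seq P) n :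
  submodule TP -> TP `<=` g @` TL ->
  exists GL : seq L, (forall l, l \in GL -> TL l) /\
    [set pi ^+ n *: t | t in TP] `&` linspan F `<=` (pi ^+ n \*: g) @` linspan GL.
Proof.
move=> sTP TP_gTL.
have [G [GNF NF_G]] := linspan_meet_fingen pi_factor F
  (submodule_image ( *:%R (pi ^+ n)) sTP) (@submodule_zero _ P).
have [GL [GLE GLT]] : exists GL, map (pi ^+ n \*: g) GL = G /\ forall l, l \in GL -> TL l.
  by apply: lift_seq => _ /GNF [[t /TP_gTL [l TLl <-] <-] _]; exists l.
exists GL; split=> // d [dTP Fd]; rewrite -linspan_map GLE.
have [|y Gy [_ [_ ->] <-]] := NF_G d; last by rewrite addr0.
by split=> //; exists d => //; exists 0; rewrite ?addr0.
Qed.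

Lemma lift_limit (TL : set L) (TP : set P) (a : nat -> P) (e : nat -> L) x0 s :
  BL TL -> submodule TL -> pi_complete pi TL -> (forall n, TL (e n)) -> TL x0 ->
  g x0 = a 0%N -> (forall n, g (pi ^+ n *: e n) = a n.+1 - a n) ->
  BP TP -> (forall n, exists2 t, TP t & s = a n + pi ^+ n *: t) ->
  exists z, [/\ TL z, g z = s &
    forall N, exists2 t, TL t & z = x0 + \sum_(k < N) pi ^+ k *: e k + pi ^+ N *: t].
Proof.
move=> BTL sTL cTL TLe TLx0 gx0 ge BTP sE.
have [z TLz zE] := pi_complete_series sTL cTL TLe.
have gx N : g (x0 + \sum_(k < N) pi ^+ k *: e k) = a N.
  rewrite linearD linear_sum gx0 (eq_bigr (fun k : 'I_N => a k.+1 - a k)) => [|k _]; last exact: ge.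
  by rewrite -(big_mkord xpredT (fun k => a k.+1 - a k)) telescope_sumr // addrC subrK.
exists (x0 + z); split; first exact: submoduleD.
  have [bP _] := cP; have [[_ bg _ _ _] _] := ext.
  have [T [BT sT TPT gTLT]] := born_module_join bP BTP (bg _ BTL).
  apply/eqP; rewrite -subr_eq0; apply/eqP; apply: (complete_born_separated cP BT) => N.
  have [t' TLt' ->] := zE N; have [t TPt ->] := sE N.
  exists (g t' - t); first by apply: submoduleB sT _ _; [apply: gTLT; exists t' | apply: TPT].
  by rewrite addrA linearD linearZ gx opprD addrACA subrr add0r scalerBr.
by move=> N; have [t TLt ->] := zE N; exists t; rewrite // addrA.
Qed.

Lemma compactoid_lift S : compactoid pi BP S -> exists S', compactoid pi BL S' /\ S = g @` S'.
Proof.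
move=> /compactoidE [TP [BTP sTP STP approx]]; have [F FP] := choice approx.
have [TL [BTL sTL cTL TP_gTL]] := bounded_lift BTP.
have [GL GLP] := choice (fun n => scaled_linspan_lift (F n ++ F n.+1) n sTP TP_gTL).
have [F0L [F0LE F0LT]] : exists F0L, map g F0L = F 0%N /\ forall l, l \in F0L -> TL l.
  by apply: lift_seq => x /(proj1 (FP 0%N)) /TP_gTL.
pose H N := F0L ++ flatten [seq GL k | k <- iota 0 N].
have GL_H N k : (k < N)%N -> linspan (GL k) `<=` linspan (H N).
  move=> ltkN; apply: sub_linspan => l GLl; rewrite mem_cat; apply/orP; right.
  by apply/flatten_mapP; exists k; rewrite // mem_iota.
have HT N : forall l, l \in H N -> TL l.
  by move=> l; rewrite mem_cat => /orP [/F0LT //|/flatten_mapP [k _ /(proj1 (GLP k))]].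
exists (approx_set pi TL H `&` g @^-1` S); split.
  apply/compactoidE; exists TL.
  by apply: (compactoid_in_subl _ (approx_set_compactoid_in pi BTL sTL HT)) => z [].
apply/seteqP; split=> [s Ss|_ [z [_ Sz] <-] //].
have [a [Fa0 da sE]] := approximation_increments sTP (fun n => proj2 (FP n) s Ss).
have lift_increment n : exists l, linspan (GL n) l /\ g (pi ^+ n *: l) = a n.+1 - a n.
  by have [l GLl lE] := proj2 (GLP n) _ (da n); exists l; rewrite linearZZ.
have [e eP] := choice lift_increment.
have [x0 F0Lx0 gx0] : exists2 x0, linspan F0L x0 & g x0 = a 0%N.
  by move: Fa0; rewrite -F0LE linspan_map => -[x0]; exists x0.
have TLe n : TL (e n) by apply: linspan_sub sTL (proj1 (GLP n)) _ (proj1 (eP n)).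
have [z [TLz gz zE]] := lift_limit BTL sTL cTL TLe (linspan_sub sTL F0LT F0Lx0) gx0
  (fun n => proj2 (eP n)) BTP sE.
exists z => //; split; last by rewrite /preimage /= gz.
split=> // N _; have [t TLt ->] := zE N.
exists (x0 + \sum_(k < N) pi ^+ k *: e k); last by exists (pi ^+ N *: t) => //; exists t.
apply: (submoduleD (linspan_submodule _)); first exact: linspan_catl.
apply: submodule_sum (linspan_submodule _) _ => k.
by apply: (GL_H N k (ltn_ord k)); apply: submoduleZ (linspan_submodule _) _; exact: proj1 (eP k).
Qed.

Lemma extension_compactoid :
  extension (compactoid pi BK) (compactoid pi BL) (compactoid pi BP) f g.
Proof.
have [[bf bg finj gsurj gker] _] := ext.
split; first by split=> // S; exact: compactoid_image.
split; last exact: compactoid_lift.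
by move=> S; split; [exact: compactoid_image | exact: compactoid_pullback].
Qed.

Lemma nuclear_extension : nuclear pi BL <-> nuclear pi BK /\ nuclear pi BP.
Proof.
have [[bf bg _ _ _] [emb quotient]] := ext; have [bL _] := cL.
split=> [nL|[nK nP] S BS].
  split=> [S BS|S /quotient [S' [BS' ->]]]; last exact: compactoid_image bg (nL _ BS').
  by apply: compactoid_pullback; apply: nL; apply: bf.
have [S' [cS' gSE]] := compactoid_lift (nP _ (bg _ BS)).
have [T [BT sT ST S'T]] := born_module_join bL BS (compactoid_bounded bL.1 cS').
have BfT : BK (f @^-1` T).
  by apply/emb; have [[_ _ BLsub] _] := bL; apply: BLsub BT => _ [k Tk <-].
apply: compactoid_subset (compactoid_sumset bL cS' (compactoid_image bf (nK _ BfT))).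
move=> s Ss; have [s' S's gs'E] : (g @` S') (g s) by rewrite -gSE; exists s.
have [k fkE] : exists k, f k = s - s' by apply/extension_exact; rewrite linearB gs'E subrr.
exists s' => //; exists (s - s'); last by rewrite addrC subrK.
by exists k; rewrite // /preimage /= fkE; apply: submoduleB => //; [exact: ST | exact: S'T].
Qed.

End Extension.

Theorem proposition4p6 (V : idomainType) (pi : V) (K L P : lmodType V)
  (BK : set (set K)) (BL : set (set L)) (BP : set (set P))
  (f : {linear K -> L}) (g : {linear L -> P}) :
  is_cdvr pi ->
  complete_born pi BK -> complete_born pi BL -> complete_born pi BP ->
  torsionfree_born pi BK -> torsionfree_born pi BL -> torsionfree_born pi BP ->
  torsionfree_mod P ->
  extension BK BL BP f g ->
  ([/\ extension (compactoid pi BK) (compactoid pi BL) (compactoid pi BP) f g,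
       complete_born pi (compactoid pi BK),
       complete_born pi (compactoid pi BL) &
       complete_born pi (compactoid pi BP)] /\
   (nuclear pi BL <-> nuclear pi BK /\ nuclear pi BP)).
Proof.
move=> [pi0 _ pi_factor _ _] cK cL cP [tfK _] [tfL _] _ tfP ext; split.
  split; first exact: extension_compactoid.
  - exact: compactoid_complete.
  - exact: compactoid_complete.
  - exact: compactoid_complete.
exact: (nuclear_extension pi0 pi_factor cL cP tfP ext).
Qed.
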